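(* Let $M\ge2$ and let $J_1,\dots,J_{M-1}$, $\mu_1,\dots,\mu_M$, $h_1^z,\dots,h_M^z$ be real numbers. On the open chain of $M$ sites consider $$H=\sum_{m=1}^{M-1}\Big(J_m c_{m+1}^\dagger c_m\sigma_{m+1}^+ + \text{h.c.}\Big)+\sum_{m=1}^{M}\mu_m c_m^\dagger c_m+\sum_{m=1}^M h_m^z\sigma_m^z.$$ For every number $\alpha$, the operator $$Q^{(\exp)}(\alpha)=\sum_{m=1}^{M}\Big[\alpha^m c_m^\dagger c_m+\alpha^{m-1}(1-\alpha)\frac{\sigma_m^z+1}{2}\Big]$$ commutes with $H$.
   Context: Each site $m$ carries one spinless fermion mode ($c_m,c_m^\dagger$, canonical anticommutation relations) and one spin-$1/2$ with Pauli matrices $\sigma_m^{x,y,z}$; $\sigma_m^{\pm}=\sigma_m^x\pm i\sigma_m^y$, so that $\sigma_m^+$ raises $\sigma_m^z$. *)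

(* Concrete model: M sites, each site carries a fermion mode
   and a spin-1/2; Hilbert space = span of basis states s : 'I_M -> bool*bool
   (fst = fermion occupation, snd = spin up).  Fermions via Jordan-Wigner.
   Sites are 0-based: site m (0 <= m < M) is site m+1 of the paper. *)
From mathcomp Require Import all_boot all_order all_algebra.
Set Implicit Arguments. Unset Strict Implicit. Unset Printing Implicit Defensive.
Import GRing.Theory Num.Theory.
Local Open Scope ring_scope.

Definition state (M : nat) := {ffun 'I_M -> bool * bool}.

Definition op (C : numClosedFieldType) (M : nat) := 'M[C]_(#|{: state M}|).

Definition mkop (C : numClosedFieldType) (M : nat)
  (f : state M -> state M -> C) : op C M :=
  \matrix_(i, j) f (enum_val i) (enum_val j).

Definition adj (C : numClosedFieldType) (M : nat) (A : op C M) : op C M :=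
  map_mx Num.conj (A^T).

Definition occ M (s : state M) (m : nat) : bool :=
  [exists k : 'I_M, (val k == m) && (s k).1].
Definition spn M (s : state M) (m : nat) : bool :=
  [exists k : 'I_M, (val k == m) && (s k).2].
Definition updf M (s : state M) (m : nat) (g : bool * bool -> bool * bool)
  : state M := [ffun k => if val k == m then g (s k) else s k].

Definition cop (C : numClosedFieldType) M (m : nat) : op C M :=
  mkop (fun o s =>
    if occ s m && (o == updf s m (fun p => (false, p.2)))
    then (-1) ^+ #|[set k : 'I_M | (val k < m)%N && (s k).1]|
    else 0).
Definition cdag (C : numClosedFieldType) M (m : nat) : op C M := adj (cop C M m).
Definition numop (C : numClosedFieldType) M (m : nat) : op C M :=
  cdag C M m *m cop C M m.

(* sigma^z_m and sigma^+_m = sigma^x_m + i sigma^y_m = 2 |up><down| *)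
Definition sigz (C : numClosedFieldType) M (m : nat) : op C M :=
  mkop (fun o s => if o == s then (if spn s m then 1 else -1) else 0).
Definition sigp (C : numClosedFieldType) M (m : nat) : op C M :=
  mkop (fun o s =>
    if ~~ spn s m && (o == updf s m (fun p => (p.1, true))) then 2 else 0).

Definition hop (C : numClosedFieldType) M (J : nat -> C) (m : nat) : op C M :=
  J m *: (cdag C M m.+1 *m cop C M m *m sigp C M m.+1).

Definition Ham (C : numClosedFieldType) M (J mu hz : nat -> C) : op C M :=
  \sum_(i < M.-1) (hop M J i + adj (hop M J i))
  + \sum_(m < M) (mu m *: numop C M m)
  + \sum_(m < M) (hz m *: sigz C M m).

(* Q^(exp)(alpha); paper site m+1 gives alpha^(m+1) and alpha^m *)
Definition Qexp (C : numClosedFieldType) M (alpha : C) : op C M :=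
  \sum_(m < M) (alpha ^+ m.+1 *: numop C M m
     + (alpha ^+ m * (1 - alpha) / 2) *: (sigz C M m + 1%:M)).

From mathcomp Require Import all_boot all_order all_algebra.
From mathcomp Require Import ring.
Import GRing.Theory Num.Theory.
Local Open Scope ring_scope.

(* Q is diagonal in the occupation/spin basis, with eigenvalue
   sum_m (alpha^(m+1) n_m + alpha^m (1 - alpha) [spin m up]) on a basis state.
   Every factor of H moves this eigenvalue by a fixed amount: c_m by
   -alpha^(m+1), c_m^dag by alpha^(m+1), sigma^+_m by alpha^m (1 - alpha) and
   sigma^z_m, n_m by 0.  In a hopping term these add up to
   alpha^(m+2) - alpha^(m+1) + alpha^(m+1) (1 - alpha) = 0, so H preserves every
   eigenspace of Q and therefore commutes with it. *)

Section Ladder.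
Context {R : pzRingType} {V : zmodType} {n : nat} (w : 'I_n -> V).

(* For [V = R] an integral domain this says [[diag w, A] = d *: A]: [A] shifts
   [w]-eigenvalues by [d]. *)
Definition ladder (d : V) (A : 'M[R]_n) :=
  forall i j, A i j != 0 -> w i = w j + d.

Lemma ladder0 {d} : ladder d 0.
Proof. by move=> i j; rewrite mxE eqxx. Qed.

Lemma ladderD {d A B} : ladder d A -> ladder d B -> ladder d (A + B).
Proof.
move=> hA hB i j; rewrite mxE.
by have [->|/hA //] := eqVneq (A i j) 0; rewrite add0r => /hB.
Qed.

Lemma ladder_sum {d I} {r : seq I} {P : pred I} {F : I -> 'M[R]_n} :
  (forall i, P i -> ladder d (F i)) -> ladder d (\sum_(i <- r | P i) F i).
Proof. by apply: big_ind => //; [exact: ladder0 | move=> A B; exact: ladderD]. Qed.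

Lemma ladderZ {d a A} : ladder d A -> ladder d (a *: A).
Proof.
move=> hA i j; rewrite mxE.
by have [->|/hA //] := eqVneq (A i j) 0; rewrite mulr0 eqxx.
Qed.

Lemma ladderM {d1 d2 A B} :
  ladder d1 A -> ladder d2 B -> ladder (d1 + d2) (A *m B).
Proof.
move=> hA hB i j; rewrite mxE.
have [k AB|AB0] := pickP (fun k => (A i k != 0) && (B k j != 0)).
  by case/andP: AB => /hA -> /hB ->; rewrite -addrA (addrC d2).
rewrite big1 ?eqxx // => k _.
by have /nandP[/negbNE/eqP->|/negbNE/eqP->] := AB0 k; rewrite ?mul0r ?mulr0.
Qed.

Lemma ladder_tr {d A} : ladder d A -> ladder (- d) A^T.
Proof. by move=> hA i j; rewrite mxE => /hA ->; rewrite addrK. Qed.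

Lemma ladder_map {d} {f : R -> R} {A} : f 0 = 0 -> ladder d A -> ladder d (map_mx f A).
Proof.
move=> f0 hA i j; rewrite mxE.
by have [->|/hA //] := eqVneq (A i j) 0; rewrite f0 eqxx.
Qed.

End Ladder.

Lemma ladder0_commute {R : comPzRingType} {n} (w : 'I_n -> R) (A : 'M[R]_n) :
  ladder w 0 A -> A *m diag_mx (\row_i w i) = diag_mx (\row_i w i) *m A.
Proof.
move=> hA; rewrite mul_mx_diag mul_diag_mx; apply/matrixP => i j; rewrite !mxE.
have [->|/hA ->] := eqVneq (A i j) 0; first by rewrite mul0r mulr0.
by rewrite addr0 mulrC.
Qed.

Section Chain.
Variables (C : numClosedFieldType) (M : nat) (alpha : C).

Definition site_charge (m : nat) (p : bool * bool) : C :=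
  (if p.1 then alpha ^+ m.+1 else 0) + (if p.2 then alpha ^+ m * (1 - alpha) else 0).

Definition charge (s : state M) : C := \sum_(k : 'I_M) site_charge k (s k).

Local Notation charge_ladder := (ladder (fun i => charge (enum_val i))).

Lemma occ_val (s : state M) (k : 'I_M) : occ s k = (s k).1.
Proof.
apply/existsP/idP => [[k' /andP[/eqP/val_inj-> //]]|sk].
by exists k; rewrite eqxx.
Qed.

Lemma spn_val (s : state M) (k : 'I_M) : spn s k = (s k).2.
Proof.
apply/existsP/idP => [[k' /andP[/eqP/val_inj-> //]]|sk].
by exists k; rewrite eqxx.
Qed.

Lemma occ_site {s : state M} {m} : occ s m -> exists k : 'I_M, val k = m.
Proof. by case/existsP => k /andP[/eqP <- _]; exists k. Qed.

Lemma charge_updf s (k : 'I_M) g :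
  charge (updf s k g) = charge s - site_charge k (s k) + site_charge k (g (s k)).
Proof.
rewrite /charge (bigD1 k) //= [in RHS](bigD1 k) //= ffunE eqxx.
rewrite (eq_bigr (fun i : 'I_M => site_charge i (s i))); first by ring.
by move=> i ik; rewrite ffunE val_eqE (negbTE ik).
Qed.

Lemma ladder_cop m : charge_ladder (- alpha ^+ m.+1) (cop C M m).
Proof.
move=> i j; rewrite mxE; case: ifP => [/andP[sm /eqP ->] _|]; last by rewrite eqxx.
have [k km] := occ_site sm; subst m; move: sm; rewrite charge_updf occ_val.
by case: (enum_val j k) => [[] b] //= _; rewrite /site_charge /=; ring.
Qed.

Lemma ladder_adj d (A : op C M) : charge_ladder d A -> charge_ladder (- d) (adj A).
Proof. by move=> hA; apply: ladder_map; [exact: conjC0 | exact: ladder_tr]. Qed.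

Lemma ladder_cdag m : charge_ladder (alpha ^+ m.+1) (cdag C M m).
Proof. by rewrite -[alpha ^+ _]opprK; apply/ladder_adj/ladder_cop. Qed.

Lemma ladder_numop m : charge_ladder 0 (numop C M m).
Proof.
by rewrite /numop -(addrN (alpha ^+ m.+1)); apply: ladderM (ladder_cdag m) (ladder_cop m).
Qed.

Lemma ladder_sigz m : charge_ladder 0 (sigz C M m).
Proof.
move=> i j; rewrite mxE addr0.
by have [->|_] := eqVneq (enum_val i) (enum_val j); rewrite ?eqxx.
Qed.

Lemma ladder_sigp (k : 'I_M) : charge_ladder (alpha ^+ k * (1 - alpha)) (sigp C M k).
Proof.
move=> i j; rewrite mxE; case: ifP => [/andP[sk /eqP ->] _|]; last by rewrite eqxx.
move: sk; rewrite charge_updf spn_val.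
by case: (enum_val j k) => [a []] //= _; rewrite /site_charge /=; ring.
Qed.

Lemma ladder_hop (J : nat -> C) m : (m < M.-1)%N -> charge_ladder 0 (hop M J m).
Proof.
move=> ltmM; have ltm1M : (m.+1 < M)%N by move: ltmM; case: (M).
have cancel_hop : alpha ^+ m.+2 + - alpha ^+ m.+1 + alpha ^+ m.+1 * (1 - alpha) = 0.
  by rewrite !exprS; ring.
apply: ladderZ; rewrite -cancel_hop.
apply: ladderM; first exact: ladderM (ladder_cdag m.+1) (ladder_cop m).
exact: ladder_sigp (Ordinal ltm1M).
Qed.

Lemma ladder_Ham (J mu hz : nat -> C) : charge_ladder 0 (Ham M J mu hz).
Proof.
apply: ladderD; first apply: ladderD; apply: ladder_sum => i _.
- apply: ladderD; first exact: ladder_hop.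
  by rewrite -oppr0; apply/ladder_adj/ladder_hop.
- exact/ladderZ/ladder_numop.
- exact/ladderZ/ladder_sigz.
Qed.

Lemma updf_clear_inj (s s' : state M) m :
  occ s m -> occ s' m ->
  updf s m (fun p => (false, p.2)) = updf s' m (fun p => (false, p.2)) -> s = s'.
Proof.
move=> sm s'm eq_clear; have [k km] := occ_site sm; subst m.
apply/ffunP => l; have := congr1 (fun f : state M => f l) eq_clear; rewrite !ffunE.
have [/val_inj->|//] := eqVneq (val l) (val k).
by move: sm s'm; rewrite !occ_val; case: (s k) (s' k) => [a b] [a' b'] /= -> -> [->].
Qed.

Lemma numopE m i j : numop C M m i j = ((i == j) && occ (enum_val i) m)%:R.
Proof.
rewrite mxE; have [im|] := boolP (occ (enum_val i) m); last first.
  by rewrite andbF => /negbTE im; rewrite big1 // => k _; rewrite !mxE im rmorph0 mul0r.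
pose k0 := enum_rank (updf (enum_val i) m (fun p => (false, p.2))).
rewrite andbT (bigD1 k0) //= big1 ?addr0; last first.
  move=> k /negbTE kk0; rewrite !mxE im /=.
  case: eqP => [ek|_]; last by rewrite rmorph0 mul0r.
  by rewrite /k0 -ek enum_valK eqxx in kk0.
rewrite !mxE enum_rankK im eqxx /=.
have [<-|nij] := eqVneq i j.
  by rewrite im eqxx /= rmorphXn rmorphN1 -exprMn mulrNN mulr1 expr1n.
case: ifP => [/andP[jm /eqP eq_clear]|]; last by rewrite mulr0.
by case/eqP: nij; apply: enum_val_inj; apply: updf_clear_inj im jm _.
Qed.

Lemma Qexp_termE (k : 'I_M) i j :
  (alpha ^+ k.+1 *: numop C M k + (alpha ^+ k * (1 - alpha) / 2) *: (sigz C M k + 1%:M)) i j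
  = (i == j)%:R * site_charge k (enum_val i k).
Proof.
rewrite mxE [X in X + _]mxE numopE !mxE (inj_eq enum_val_inj).
have [<-|_] := eqVneq i j; last by rewrite add0r !mulr0 addr0 mul0r.
have two_neq0 : (2 : C) != 0 by rewrite pnatr_eq0.
rewrite occ_val spn_val /site_charge mul1r.
by case: (enum_val i k) => [[] []] /=; field.
Qed.

Lemma Qexp_diagE : Qexp M alpha = diag_mx (\row_i charge (enum_val i)).
Proof.
apply/matrixP => i j; rewrite /Qexp summxE [RHS]mxE.
under eq_bigr => k _ do rewrite Qexp_termE.
by rewrite -mulr_sumr mulr_natl mxE.
Qed.
End Chain.

Theorem mainTheorem6 (C : numClosedFieldType) (M : nat) (J mu hz : nat -> C)
  (alpha : C) :
  (2 <= M)%N ->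
  (forall m, (m < M.-1)%N -> J m \is Num.real) ->
  (forall m, (m < M)%N -> mu m \is Num.real) ->
  (forall m, (m < M)%N -> hz m \is Num.real) ->
  Ham M J mu hz *m Qexp M alpha = Qexp M alpha *m Ham M J mu hz.
Proof.
(* The commutation holds for arbitrary complex couplings and any chain length. *)
move=> _ _ _ _; rewrite Qexp_diagE.
exact/ladder0_commute/ladder_Ham.
Qed.
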